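(* Let $c\in(0,1)$ and let $\sigma>0$ satisfy $C_{\mathrm{BS}}(\sigma)=c$. For $y>0$ define $$G(y)=d_1^{-1}\!\left(\Phi^{-1}\!\left(\frac{c}{C_{\mathcal D}(y)}\right)\right).$$ If $U\ge\sigma$ (i.e. $U$ is an upper bound of the implied volatility, e.g. $U=U(c)$ for an upper-bound function $U$), then $c/C_{\mathcal D}(U)\in(0,1)$, $G(U)$ is well defined, and $$L_2(c)\le G(U)\le\sigma,\qquad\text{where } L_2(c)=d_1^{-1}(\Phi^{-1}(c)).$$
   Context: Fix $k\ge 0$. Let $\Phi$ and $\phi$ denote the standard normal distribution function and density. For $\sigma>0$ put $d_1(\sigma)=-k/\sigma+\sigma/2$, $d_2(\sigma)=-k/\sigma-\sigma/2$, and $C_{\mathrm{BS}}(\sigma)=\Phi(d_1(\sigma))-e^k\,\Phi(d_2(\sigma))$, a strictly increasing bijection from $(0,\infty)$ onto $(0,1)$; for $c\in(0,1)$ the implied volatility is the unique $\sigma>0$ with $C_{\mathrm{BS}}(\sigma)=c$. The price-to-delta ratio is $C_{\mathcal D}(y)=C_{\mathrm{BS}}(y)/\Phi(d_1(y))$. The function $d_1^{-1}(x)=x+\sqrt{x^2+2k}$ (which equals $2\max(x,0)$ when $k=0$) is the inverse of $d_1$. *)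

From Stdlib Require Import Reals Lra ClassicalEpsilon.
From Coquelicot Require Import Coquelicot.
Open Scope R_scope.

Definition phi (x : R) : R := exp (- x ^ 2 / 2) / sqrt (2 * PI).

Definition Phi (x : R) : R :=
  RInt_gen phi (Rbar_locally m_infty) (at_point x).

(* quantile function: some x with Phi x = p (unique when p in (0,1),
   since Phi is a strictly increasing bijection R -> (0,1)) *)
Definition Phi_inv (p : R) : R :=
  epsilon (inhabits 0) (fun x => Phi x = p).

Definition d1 (k s : R) : R := - k / s + s / 2.
Definition d2 (k s : R) : R := - k / s - s / 2.

Definition C_BS (k s : R) : R := Phi (d1 k s) - exp k * Phi (d2 k s).

Definition C_D (k y : R) : R := C_BS k y / Phi (d1 k y).

Definition d1_inv (k x : R) : R := x + sqrt (x ^ 2 + 2 * k).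

Definition G (k c y : R) : R := d1_inv k (Phi_inv (c / C_D k y)).

Definition L2 (k c : R) : R := d1_inv k (Phi_inv c).

(* With [gauss x = exp(-x^2/2)] and its integral
      [gauss_int] from 0, Feynman's trick ([gauss_int^2 + 2 feyn = pi/2]) shows
      that every partial integral of [gauss] is at most [sqrt (2 pi)].
   2. The normal distribution.  [norm_prim = gauss_int / sqrt (2 pi)] is an
      increasing antiderivative of [phi] with oscillation at most 1, hence has a
      finite infimum, which is its limit at [-oo]; so [Phi = norm_prim - inf].  From [dC_BS/ds = phi(d1)] and the inequality
      [d1'(y) C_BS(y) <= Phi(d1(y))] the price-to-delta ratio [C_D] is
      nondecreasing; with [C_D <= 1] this puts [c / C_D(U)] in
      [[c, Phi(d1(sigma))]], and the monotone maps [Phi_inv], [d1_inv]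
      (with [d1_inv (d1 sigma) = sigma]) carry these bounds to the result. *)

From Pilot Require Import Defs.
From Stdlib Require Import Reals Lra ClassicalEpsilon FunctionalExtensionality.
From Coquelicot Require Import Coquelicot.
(* Coquelicot also defines a [d1]; make [d1] refer to the Black-Scholes one. *)
Import Pilot.Defs.
Open Scope R_scope.

(* Coquelicot states real equalities over its own ring structures; this turns
   such a goal back into an equality in [R] so that [ring]/[field] apply. *)
Ltac as_real_eq := match goal with |- ?a = ?b => change (@eq R a b) end.

Lemma mvt_on (f df : R -> R) (a b : R) :
  a <= b ->
  (forall x, a <= x <= b -> is_derive f x (df x)) ->
  exists c, a <= c <= b /\ f b - f a = df c * (b - a).
Proof.
  intros Hab Hd.
  destruct (MVT_gen f a b df) as [c [Hc Heq]];
    rewrite ?Rmin_left, ?Rmax_right in * by lra.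
  - intros x Hx; apply Hd; lra.
  - intros x Hx; apply continuity_pt_filterlim,
      (ex_derive_continuous (K := R_AbsRing) (V := R_NormedModule)).
    eexists; apply Hd; lra.
  - exists c; split; assumption.
Qed.

Lemma nondecr_of_deriv (f df : R -> R) (a b : R) :
  a <= b ->
  (forall x, a <= x <= b -> is_derive f x (df x)) ->
  (forall x, a <= x <= b -> 0 <= df x) -> f a <= f b.
Proof.
  intros Hab Hd Hp.
  destruct (mvt_on f df a b Hab Hd) as [c [Hc Heq]].
  assert (0 <= df c * (b - a)) by (apply Rmult_le_pos; [apply Hp|]; lra).
  lra.
Qed.

Lemma incr_of_deriv (f df : R -> R) (a b : R) :
  a < b ->
  (forall x, a <= x <= b -> is_derive f x (df x)) ->
  (forall x, a <= x <= b -> 0 < df x) -> f a < f b.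
Proof.
  intros Hab Hd Hp.
  destruct (mvt_on f df a b (Rlt_le _ _ Hab) Hd) as [c [Hc Heq]].
  assert (0 < df c * (b - a)) by (apply Rmult_lt_0_compat; [apply Hp|]; lra).
  lra.
Qed.

Lemma const_of_deriv0 (f : R -> R) (a b : R) :
  (forall x, is_derive f x 0) -> f a = f b.
Proof.
  intros Hd.
  destruct (Rle_or_lt a b) as [Hab | Hba].
  - destruct (mvt_on f (fun _ => 0) a b Hab (fun x _ => Hd x)) as [c [_ Hc]]; lra.
  - destruct (mvt_on f (fun _ => 0) b a (Rlt_le _ _ Hba) (fun x _ => Hd x))
      as [c [_ Hc]]; lra.
Qed.

Definition gauss (x : R) : R := exp (- x ^ 2 / 2).

Definition gauss_int (x : R) : R := RInt gauss 0 x.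

Lemma gauss_continuous (x : R) : continuous gauss x.
Proof.
  apply (ex_derive_continuous (K := R_AbsRing) (V := R_NormedModule)).
  unfold gauss; auto_derive; auto.
Qed.

Lemma ex_RInt_gauss (a b : R) : ex_RInt gauss a b.
Proof.
  apply (ex_RInt_continuous (V := R_CompleteNormedModule)).
  intros; apply gauss_continuous.
Qed.

Lemma gauss_int_deriv (x : R) : is_derive gauss_int x (gauss x).
Proof.
  apply (is_derive_RInt gauss gauss_int 0 x).
  - apply filter_forall; intros b.
    apply (RInt_correct (V := R_CompleteNormedModule)), ex_RInt_gauss.
  - apply gauss_continuous.
Qed.

(* [gauss] is even, so [gauss_int] is odd. *)
Lemma gauss_int_odd (x : R) : gauss_int (- x) = - gauss_int x.
Proof.
  unfold gauss_int.
  assert (H := RInt_comp_lin (V := R_CompleteNormedModule) gauss (-1) 0 0 x).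
  replace (-1 * 0 + 0) with 0 in H by ring.
  replace (-1 * x + 0) with (- x) in H by ring.
  rewrite <- H by apply ex_RInt_gauss.
  rewrite (RInt_ext (V := R_CompleteNormedModule) _ (fun y => scal (-1) (gauss y))).
  - rewrite (RInt_scal (V := R_CompleteNormedModule)) by apply ex_RInt_gauss.
    change (scal ?a ?b) with (a * b); ring.
  - intros y _; unfold gauss; f_equal; f_equal; field.
Qed.

(* Feynman's auxiliary function [feyn u = int_0^1 exp(-u^2 (1+t^2)/2)/(1+t^2) dt];
   its derivative is [-gauss u * gauss_int u], whence [gauss_int^2 + 2 feyn]
   is constant, equal to its value [pi/2] at 0. *)
Definition feyn_integrand (u t : R) : R :=
  exp (- (u ^ 2 * (1 + t ^ 2)) / 2) / (1 + t ^ 2).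

Definition feyn_integrand_du (u t : R) : R :=
  - u * exp (- (u ^ 2 * (1 + t ^ 2)) / 2).

Definition feyn (u : R) : R := RInt (feyn_integrand u) 0 1.

Lemma feyn_integrand_deriv (u t : R) :
  is_derive (fun z => feyn_integrand z t) u (feyn_integrand_du u t).
Proof.
  unfold feyn_integrand, feyn_integrand_du; auto_derive; auto; simpl.
  as_real_eq; unfold Rdiv; field; nra.
Qed.

Lemma feyn_integrand_du_continuous (u t : R) :
  continuity_2d_pt feyn_integrand_du u t.
Proof.
  unfold feyn_integrand_du.
  apply continuity_2d_pt_mult.
  - apply continuity_2d_pt_opp, continuity_2d_pt_id1.
  - apply (continuity_1d_2d_pt_comp exp (fun u v => - (u ^ 2 * (1 + v ^ 2)) / 2)).
    + apply derivable_continuous_pt, derivable_pt_exp.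
    + apply (continuity_2d_pt_ext (fun u v => (u * u * (1 + v * v)) * (- / 2))).
      { intros; simpl; field. }
      repeat first [ apply continuity_2d_pt_mult | apply continuity_2d_pt_plus
                   | apply continuity_2d_pt_const | apply continuity_2d_pt_id1
                   | apply continuity_2d_pt_id2 ].
Qed.

Lemma ex_RInt_feyn_integrand (u a b : R) : ex_RInt (feyn_integrand u) a b.
Proof.
  apply (ex_RInt_continuous (V := R_CompleteNormedModule)); intros t _.
  apply (ex_derive_continuous (K := R_AbsRing) (V := R_NormedModule)).
  unfold feyn_integrand; auto_derive; simpl; nra.
Qed.

(* Differentiation under the integral sign, then the substitution [s = u t]. *)
Lemma feyn_deriv (u : R) : is_derive feyn u (- gauss u * gauss_int u).
Proof.
  replace (- gauss u * gauss_int u)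
    with (RInt (fun t => Derive (fun z => feyn_integrand z t) u) 0 1).
  - apply is_derive_RInt_param.
    + apply filter_forall; intros y t _; eexists; apply feyn_integrand_deriv.
    + intros t _; apply (continuity_2d_pt_ext feyn_integrand_du).
      { intros v w; symmetry; apply is_derive_unique, feyn_integrand_deriv. }
      apply feyn_integrand_du_continuous.
    + apply filter_forall; intros y; apply ex_RInt_feyn_integrand.
  - rewrite (RInt_ext (V := R_CompleteNormedModule) _
               (fun t => scal (- gauss u) (scal u (gauss (u * t + 0))))).
    + rewrite (RInt_scal (V := R_CompleteNormedModule)).
      * rewrite (RInt_comp_lin (V := R_CompleteNormedModule)) by apply ex_RInt_gauss.
        replace (u * 0 + 0) with 0 by ring; replace (u * 1 + 0) with u by ring.
        reflexivity.
      * apply (ex_RInt_continuous (V := R_CompleteNormedModule)); intros.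
        apply (ex_derive_continuous (K := R_AbsRing) (V := R_NormedModule)).
        unfold gauss; change scal with (@mult R_Ring); unfold mult; simpl.
        auto_derive; auto.
    + intros t _.
      replace (Derive (fun z : R => feyn_integrand z t) u) with (feyn_integrand_du u t)
        by (symmetry; apply is_derive_unique, feyn_integrand_deriv).
      unfold feyn_integrand_du, gauss.
      replace (- (u ^ 2 * (1 + t ^ 2)) / 2)
        with (- u ^ 2 / 2 + - (u * t + 0) ^ 2 / 2) by field.
      rewrite exp_plus; unfold scal; simpl; unfold mult; simpl.
      as_real_eq; ring.
Qed.

(* [feyn 0 = int_0^1 dt/(1+t^2) = atan 1 = pi/4]. *)
Lemma feyn_0 : feyn 0 = PI / 4.
Proof.
  unfold feyn.
  rewrite (RInt_ext (V := R_CompleteNormedModule) _ (fun t => / (1 + t ^ 2))).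
  - rewrite (is_RInt_unique (V := R_CompleteNormedModule) _ 0 1 (atan 1 - atan 0)).
    + rewrite atan_1, atan_0; change zero with 0; lra.
    + apply (is_RInt_derive (V := R_CompleteNormedModule) atan).
      * intros t _; apply is_derive_Reals, derivable_pt_lim_atan.
      * intros t _; apply (ex_derive_continuous (K := R_AbsRing) (V := R_NormedModule)).
        auto_derive; nra.
  - intros t _; unfold feyn_integrand.
    replace (- (0 ^ 2 * (1 + t ^ 2)) / 2) with 0 by field.
    rewrite exp_0; as_real_eq; field; nra.
Qed.

Lemma gauss_int_feyn (x : R) : gauss_int x * gauss_int x + 2 * feyn x = PI / 2.
Proof.
  set (H := fun x => plus (mult (gauss_int x) (gauss_int x)) (2 * feyn x)).
  assert (Hd : forall y, is_derive H y 0).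
  { intros y.
    replace 0 with (plus (plus (mult (gauss y) (gauss_int y))
                               (mult (gauss_int y) (gauss y)))
                         (2 * (- gauss y * gauss_int y)))
      by (unfold plus, mult; simpl; as_real_eq; ring).
    apply (is_derive_plus (K := R_AbsRing) (V := R_NormedModule)).
    - apply (is_derive_mult (K := R_AbsRing)); try apply gauss_int_deriv.
      intros; apply Rmult_comm.
    - apply is_derive_scal, feyn_deriv. }
  change (H x = PI / 2).
  rewrite (const_of_deriv0 H x 0 Hd).
  unfold H, gauss_int; rewrite RInt_point, feyn_0.
  unfold plus, mult; simpl; change zero with 0; lra.
Qed.

Lemma feyn_nonneg (x : R) : 0 <= feyn x.
Proof.
  apply RInt_ge_0; [lra | apply ex_RInt_feyn_integrand |].
  intros t _; unfold feyn_integrand.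
  apply Rlt_le, Rdiv_lt_0_compat; [apply exp_pos | nra].
Qed.

Lemma gauss_int_le (x : R) : gauss_int x <= sqrt (PI / 2).
Proof.
  assert (H := gauss_int_feyn x); assert (H2 := feyn_nonneg x).
  assert (HP := PI_RGT_0).
  assert (Hs := sqrt_sqrt (PI / 2) ltac:(lra)).
  assert (Hs0 := sqrt_pos (PI / 2)).
  destruct (Rle_or_lt (gauss_int x) (sqrt (PI / 2))); auto; nra.
Qed.

Lemma gauss_int_diff_le (a b : R) : gauss_int b - gauss_int a <= sqrt (2 * PI).
Proof.
  assert (H1 := gauss_int_le b); assert (H2 := gauss_int_le (- a)).
  rewrite gauss_int_odd in H2.
  replace (2 * PI) with (2 * 2 * (PI / 2)) by field.
  rewrite sqrt_mult, sqrt_square by (assert (HP := PI_RGT_0); lra).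
  lra.
Qed.

Lemma sqrt_2PI_pos : 0 < sqrt (2 * PI).
Proof. apply sqrt_lt_R0; assert (H := PI_RGT_0); lra. Qed.

Lemma phi_pos (x : R) : 0 < phi x.
Proof. apply Rdiv_lt_0_compat; [apply exp_pos | apply sqrt_2PI_pos]. Qed.

Lemma phi_le_1 (x : R) : phi x <= 1.
Proof.
  unfold phi.
  assert (H1 : exp (- x ^ 2 / 2) <= 1).
  { rewrite <- exp_0; destruct (Req_dec x 0) as [-> | Hx].
    - right; f_equal; field.
    - left; apply exp_increasing; assert (0 < x ^ 2) by nra; lra. }
  assert (H2 : 1 < sqrt (2 * PI)).
  { assert (H := PI2_3_2); rewrite <- sqrt_1; apply sqrt_lt_1; lra. }
  apply Rle_div_l; lra.
Qed.

Definition norm_prim (x : R) : R := gauss_int x / sqrt (2 * PI).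

Lemma norm_prim_deriv (x : R) : is_derive norm_prim x (phi x).
Proof.
  assert (H := sqrt_2PI_pos).
  apply is_derive_ext with (f := fun x => / sqrt (2 * PI) * gauss_int x).
  { intros t; unfold norm_prim; as_real_eq; field; lra. }
  replace (phi x) with (/ sqrt (2 * PI) * gauss x)
    by (unfold phi, gauss; field; lra).
  apply is_derive_scal, gauss_int_deriv.
Qed.

Lemma norm_prim_lt (a b : R) : a < b -> norm_prim a < norm_prim b.
Proof.
  intros H; apply (incr_of_deriv norm_prim phi); auto.
  - intros; apply norm_prim_deriv.
  - intros; apply phi_pos.
Qed.

Lemma norm_prim_le (a b : R) : a <= b -> norm_prim a <= norm_prim b.
Proof. intros [H | ->]; [left; apply norm_prim_lt |]; lra. Qed.

Lemma norm_prim_diff_le (a b : R) : norm_prim b - norm_prim a <= 1.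
Proof.
  assert (H := sqrt_2PI_pos); assert (H2 := gauss_int_diff_le a b).
  unfold norm_prim.
  replace (gauss_int b / sqrt (2 * PI) - gauss_int a / sqrt (2 * PI))
    with ((gauss_int b - gauss_int a) / sqrt (2 * PI)) by (field; lra).
  apply Rle_div_l; lra.
Qed.

Definition norm_prim_inf : R :=
  real (Glb_Rbar (fun y => exists x, y = norm_prim x)).

(* The infimum is finite: [norm_prim] is bounded below by [norm_prim 0 - 1]. *)
Lemma norm_prim_glb :
  is_glb_Rbar (fun y => exists x, y = norm_prim x) (Finite norm_prim_inf).
Proof.
  unfold norm_prim_inf.
  assert (H := Glb_Rbar_correct (fun y => exists x, y = norm_prim x)).
  destruct (Glb_Rbar _) as [l | |]; [exact H | exfalso | exfalso].
  - destruct H as [Hlb _]; apply (Hlb (norm_prim 0)); exists 0; reflexivity.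
  - destruct H as [_ Hgr].
    apply (Hgr (Finite (norm_prim 0 - 1))).
    intros y [x ->]; simpl; assert (H := norm_prim_diff_le x 0); lra.
Qed.

Lemma norm_prim_inf_le (x : R) : norm_prim_inf <= norm_prim x.
Proof. destruct norm_prim_glb as [Hlb _]; apply (Hlb (norm_prim x)); exists x; auto. Qed.

Lemma norm_prim_inf_ge (m : R) : (forall x, m <= norm_prim x) -> m <= norm_prim_inf.
Proof.
  intros Hm; destruct norm_prim_glb as [_ Hgr].
  apply (Hgr (Finite m)); intros y [x ->]; apply Hm.
Qed.

Lemma norm_prim_inf_approx (e : R) :
  0 < e -> exists x, norm_prim x < norm_prim_inf + e.
Proof.
  intros He; apply not_all_not_ex; intros Hn.
  assert (norm_prim_inf + e <= norm_prim_inf); [| lra].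
  apply norm_prim_inf_ge; intros x; apply Rnot_lt_le, Hn.
Qed.

(* [norm_prim] is monotone, so it converges to its infimum at [-oo]. *)
Lemma norm_prim_lim :
  filterlim norm_prim (Rbar_locally m_infty) (locally norm_prim_inf).
Proof.
  intros P [eps HP].
  destruct (norm_prim_inf_approx eps (cond_pos eps)) as [x0 Hx0].
  exists x0; intros x Hx; apply HP.
  assert (H1 := norm_prim_inf_le x).
  assert (H2 : norm_prim x <= norm_prim x0) by (apply norm_prim_le; lra).
  change (Rabs (norm_prim x - norm_prim_inf) < eps).
  rewrite Rabs_right; lra.
Qed.

Lemma at_point_proper (x : R) : ProperFilter' (at_point x).
Proof. constructor; [| constructor]; unfold at_point; auto. Qed.

(* Fundamental theorem of calculus on [(-oo, x]]. *)
Lemma Phi_eq (x : R) : Phi x = norm_prim x - norm_prim_inf.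
Proof.
  assert (HD : Derive norm_prim = phi).
  { apply functional_extensionality; intros t.
    apply is_derive_unique, norm_prim_deriv. }
  unfold Phi; apply (@is_RInt_gen_unique R_CompleteNormedModule _ _
           (Proper_StrongProper _ (Rbar_locally_filter _)) (at_point_proper x)).
  rewrite <- HD.
  apply (@is_RInt_gen_Derive (Rbar_locally m_infty) (at_point x)
           (@filter_filter _ _ (Rbar_locally_filter _))
           (@filter_filter' _ _ (at_point_proper x))).
  - apply filter_forall; intros ab t _; eexists; apply norm_prim_deriv.
  - apply filter_forall; intros ab t _; rewrite HD.
    apply (ex_derive_continuous (K := R_AbsRing) (V := R_NormedModule)).
    unfold phi; auto_derive; assert (H := sqrt_2PI_pos); lra.
  - apply norm_prim_lim.
  - intros P HP; unfold filtermap, at_point; exact (locally_singleton _ _ HP).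
Qed.

Lemma Phi_deriv (x : R) : is_derive Phi x (phi x).
Proof.
  apply is_derive_ext with (f := fun t => minus (norm_prim t) norm_prim_inf).
  { intros t; rewrite Phi_eq; reflexivity. }
  replace (phi x) with (minus (phi x) 0)
    by (unfold minus, plus, opp; simpl; as_real_eq; ring).
  apply (is_derive_minus (K := R_AbsRing) (V := R_NormedModule)).
  - apply norm_prim_deriv.
  - apply (is_derive_const (K := R_AbsRing) (V := R_NormedModule)).
Qed.

Lemma Phi_lt (a b : R) : a < b -> Phi a < Phi b.
Proof. intros H; rewrite !Phi_eq; assert (H' := norm_prim_lt a b H); lra. Qed.

Lemma Phi_le_inv (x y : R) : Phi x <= Phi y -> x <= y.
Proof.
  intros H; destruct (Rle_or_lt x y) as [| Hyx]; auto.
  assert (H' := Phi_lt y x Hyx); lra.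
Qed.

Lemma Phi_pos (x : R) : 0 < Phi x.
Proof.
  rewrite Phi_eq; assert (H1 := norm_prim_inf_le (x - 1)).
  assert (H2 := norm_prim_lt (x - 1) x ltac:(lra)); lra.
Qed.

(* [norm_prim (x+1) - 1] is a lower bound of [norm_prim], so
   [Phi x < Phi (x+1) <= 1]. *)
Lemma Phi_lt_1 (x : R) : Phi x < 1.
Proof.
  rewrite Phi_eq.
  assert (H1 := norm_prim_lt x (x + 1) ltac:(lra)).
  assert (H2 : norm_prim (x + 1) - 1 <= norm_prim_inf).
  { apply norm_prim_inf_ge; intros y; assert (H := norm_prim_diff_le y (x + 1)); lra. }
  lra.
Qed.

Lemma Phi_inv_spec (p b : R) :
  0 < p -> p <= Phi b -> Phi (Phi_inv p) = p /\ Phi_inv p <= b.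
Proof.
  intros Hp Hb.
  destruct (norm_prim_inf_approx p Hp) as [a Ha].
  assert (Hap : Phi a < p) by (rewrite Phi_eq; lra).
  assert (Hab : a <= b) by (apply Phi_le_inv; lra).
  assert (Hcont : continuity Phi).
  { intros x; apply continuity_pt_filterlim,
      (ex_derive_continuous (K := R_AbsRing) (V := R_NormedModule)).
    eexists; apply Phi_deriv. }
  assert (HP : Phi (Phi_inv p) = p).
  { unfold Phi_inv; apply epsilon_spec.
    destruct (IVT_gen Phi a b p Hcont) as [x [_ Hx]];
      [rewrite Rmin_left, Rmax_right; lra | exists x; exact Hx]. }
  split; [exact HP | apply Phi_le_inv; lra].
Qed.

Definition d1_rate (k s : R) : R := k / s ^ 2 + 1 / 2.

Lemma d1_deriv (k s : R) : 0 < s -> is_derive (d1 k) s (d1_rate k s).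
Proof. intros Hs; unfold d1, d1_rate; auto_derive; [lra |]; simpl; as_real_eq; field; lra. Qed.

Lemma d2_deriv (k s : R) : 0 < s -> is_derive (d2 k) s (k / s ^ 2 - 1 / 2).
Proof. intros Hs; unfold d2; auto_derive; [lra |]; simpl; as_real_eq; field; lra. Qed.

Lemma d1_rate_pos (k s : R) : 0 <= k -> 0 < s -> 0 < d1_rate k s.
Proof.
  intros Hk Hs; unfold d1_rate.
  assert (0 <= k / s ^ 2) by (apply Rdiv_le_0_compat; [lra | apply pow_lt; lra]).
  lra.
Qed.

Lemma d1_rate_antitone (k a b : R) : 0 <= k -> 0 < a <= b -> d1_rate k b <= d1_rate k a.
Proof.
  intros Hk Hab; unfold d1_rate, Rdiv.
  apply Rplus_le_compat_r, Rmult_le_compat_l; [lra |].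
  apply Rinv_le_contravar; [apply pow_lt; lra | apply pow_incr; lra].
Qed.

Lemma phi_d2_d1 (k s : R) : 0 < s -> exp k * phi (d2 k s) = phi (d1 k s).
Proof.
  intros Hs; unfold phi.
  replace (- d1 k s ^ 2 / 2) with (k + - d2 k s ^ 2 / 2) by (unfold d1, d2; field; lra).
  rewrite exp_plus; unfold Rdiv; ring.
Qed.

Lemma Phi_comp_deriv (f : R -> R) (s df : R) :
  is_derive f s df -> is_derive (fun t => Phi (f t)) s (phi (f s) * df).
Proof.
  intros H; rewrite Rmult_comm.
  apply (is_derive_comp (K := R_AbsRing) (V := R_NormedModule) Phi f); auto.
  apply Phi_deriv.
Qed.

Lemma C_BS_deriv (k s : R) : 0 < s -> is_derive (C_BS k) s (phi (d1 k s)).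
Proof.
  intros Hs; unfold C_BS.
  apply is_derive_ext with (f := fun t => minus (Phi (d1 k t)) (exp k * Phi (d2 k t))).
  { intros; reflexivity. }
  replace (phi (d1 k s))
    with (minus (phi (d1 k s) * d1_rate k s)
                (exp k * (phi (d2 k s) * (k / s ^ 2 - 1 / 2)))).
  - apply (is_derive_minus (K := R_AbsRing) (V := R_NormedModule)).
    + apply Phi_comp_deriv, d1_deriv; auto.
    + apply is_derive_scal, Phi_comp_deriv, d2_deriv; auto.
  - unfold minus, plus, opp, d1_rate; simpl; as_real_eq.
    rewrite <- (phi_d2_d1 k s Hs); field; lra.
Qed.

(* [C_BS s <= s]: since [t - Phi t] is nondecreasing ([phi <= 1]) and
   [d1 - d2 = s], [Phi d1 - Phi d2 <= s], and [e^k >= 1]. *)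
Lemma C_BS_le (k s : R) : 0 <= k -> 0 < s -> C_BS k s <= s.
Proof.
  intros Hk Hs; unfold C_BS.
  assert (Hek : 1 <= exp k) by (assert (H := exp_ineq1_le k); lra).
  assert (H2 := Phi_pos (d2 k s)).
  assert (H : d2 k s - Phi (d2 k s) <= d1 k s - Phi (d1 k s)).
  { apply (nondecr_of_deriv (fun t => t - Phi t) (fun t => 1 - phi t)).
    - unfold d1, d2; lra.
    - intros x _.
      apply is_derive_ext with (f := fun t => minus t (Phi t)); [reflexivity |].
      apply (is_derive_minus (K := R_AbsRing) (V := R_NormedModule)).
      + apply (is_derive_id (K := R_AbsRing)).
      + apply Phi_deriv.
    - intros x _; assert (H := phi_le_1 x); lra. }
  assert (Hd : d1 k s - d2 k s = s) by (unfold d1, d2; field; lra).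
  nra.
Qed.

(* For fixed [y], [s |-> Phi (d1 s) - d1_rate y * C_BS s] is nondecreasing on
   [(0, y]]: its derivative is [phi (d1 s) * (d1_rate s - d1_rate y) >= 0]. *)
Lemma delta_gap_mono (k y e : R) :
  0 <= k -> 0 < e <= y ->
  Phi (d1 k e) - d1_rate k y * C_BS k e <= Phi (d1 k y) - d1_rate k y * C_BS k y.
Proof.
  intros Hk He.
  apply (nondecr_of_deriv (fun s => Phi (d1 k s) - d1_rate k y * C_BS k s)
           (fun s => phi (d1 k s) * d1_rate k s - d1_rate k y * phi (d1 k s))).
  - lra.
  - intros x Hx.
    apply is_derive_ext
      with (f := fun t => minus (Phi (d1 k t)) (d1_rate k y * C_BS k t)); [reflexivity |].
    apply (is_derive_minus (K := R_AbsRing) (V := R_NormedModule)).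
    + apply Phi_comp_deriv, d1_deriv; lra.
    + apply is_derive_scal, C_BS_deriv; lra.
  - intros x Hx.
    assert (Hp := phi_pos (d1 k x)).
    assert (Hr := d1_rate_antitone k x y Hk ltac:(lra)).
    nra.
Qed.

(* The key inequality [d1'(y) * C_BS y <= Phi (d1 y)]: otherwise the gap of
   [delta_gap_mono] would be negative at [y], yet close to [Phi (d1 e) > 0]
   for small [e] because [C_BS e <= e]. *)
Lemma price_delta_ineq (k y : R) :
  0 <= k -> 0 < y -> d1_rate k y * C_BS k y <= Phi (d1 k y).
Proof.
  intros Hk Hy.
  set (D := d1_rate k y).
  assert (HD : 0 < D) by apply (d1_rate_pos k y Hk Hy).
  set (gap := Phi (d1 k y) - D * C_BS k y).
  destruct (Rle_or_lt 0 gap) as [Hg | Hg]; [unfold gap in Hg; lra | exfalso].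
  set (e := Rmin (y / 2) (- gap / (2 * D))).
  assert (He : 0 < e) by (apply Rmin_pos; [| apply Rdiv_lt_0_compat]; lra).
  assert (Hey : e <= y / 2) by apply Rmin_l.
  assert (HDe : D * e <= - gap / 2).
  { assert (H := Rmin_r (y / 2) (- gap / (2 * D))); fold e in H.
    apply (Rmult_le_compat_l D) in H; [| lra].
    replace (D * (- gap / (2 * D))) with (- gap / 2) in H by (field; lra); exact H. }
  assert (H1 := delta_gap_mono k y e Hk ltac:(lra)); fold D gap in H1.
  assert (H2 := C_BS_le k e Hk He).
  assert (H3 := Phi_pos (d1 k e)).
  assert (H4 : D * C_BS k e <= D * e) by (apply Rmult_le_compat_l; lra).
  lra.
Qed.

Lemma C_D_mono (k a b : R) : 0 <= k -> 0 < a -> a <= b -> C_D k a <= C_D k b.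
Proof.
  intros Hk Ha Hab; unfold C_D.
  apply (nondecr_of_deriv (fun s => C_BS k s / Phi (d1 k s))
    (fun s => (phi (d1 k s) * Phi (d1 k s) - C_BS k s * (phi (d1 k s) * d1_rate k s))
              / Phi (d1 k s) ^ 2)).
  - exact Hab.
  - intros x Hx; apply (is_derive_div (C_BS k) (fun s => Phi (d1 k s))).
    + apply C_BS_deriv; lra.
    + apply (Phi_comp_deriv (d1 k)), d1_deriv; lra.
    + apply Rgt_not_eq, Phi_pos.
  - intros x Hx.
    assert (H1 := price_delta_ineq k x Hk ltac:(lra)).
    assert (H2 := phi_pos (d1 k x)).
    apply Rdiv_le_0_compat; [| apply pow_lt, Phi_pos].
    replace (phi (d1 k x) * Phi (d1 k x) - C_BS k x * (phi (d1 k x) * d1_rate k x))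
      with (phi (d1 k x) * (Phi (d1 k x) - d1_rate k x * C_BS k x)) by ring.
    apply Rmult_le_pos; lra.
Qed.

Lemma C_BS_le_delta (k s : R) : C_BS k s <= Phi (d1 k s).
Proof.
  unfold C_BS.
  assert (0 < exp k * Phi (d2 k s)) by (apply Rmult_lt_0_compat; [apply exp_pos | apply Phi_pos]).
  lra.
Qed.

Lemma C_D_le_1 (k s : R) : C_D k s <= 1.
Proof.
  unfold C_D; assert (H := Phi_pos (d1 k s)).
  apply (Rdiv_le_1 _ _ H), C_BS_le_delta.
Qed.

Lemma d1_inv_mono (k x y : R) : 0 <= k -> x <= y -> d1_inv k x <= d1_inv k y.
Proof.
  intros Hk Hxy; unfold d1_inv.
  set (A := sqrt (x ^ 2 + 2 * k)); set (B := sqrt (y ^ 2 + 2 * k)).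
  assert (HA : A * A = x ^ 2 + 2 * k) by (apply sqrt_sqrt; nra).
  assert (HB : B * B = y ^ 2 + 2 * k) by (apply sqrt_sqrt; nra).
  assert (HA0 : 0 <= A) by apply sqrt_pos.
  assert (HB0 : 0 <= B) by apply sqrt_pos.
  assert (HBy : 0 <= B + y) by nra.
  nra.
Qed.

Lemma d1_inv_d1 (k s : R) : 0 <= k -> 0 < s -> d1_inv k (d1 k s) = s.
Proof.
  intros Hk Hs; unfold d1_inv.
  replace (d1 k s ^ 2 + 2 * k) with ((k / s + s / 2) * (k / s + s / 2))
    by (unfold d1; field; lra).
  assert (0 <= k / s) by (apply Rdiv_le_0_compat; lra).
  rewrite sqrt_square by lra.
  unfold d1; field; lra.
Qed.

(* The probability level fed to [Phi_inv] in [G k c U] lies in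
   [[c, Phi (d1 sigma)]]: [C_D U] is at most 1 and, by monotonicity,
   at least [C_D sigma = c / Phi (d1 sigma)]. *)
Lemma G_level_bounds (k c sigma U : R) :
  0 <= k -> 0 < c -> 0 < sigma -> C_BS k sigma = c -> sigma <= U ->
  c <= c / C_D k U <= Phi (d1 k sigma).
Proof.
  intros Hk Hc Hs Hsig HU.
  assert (HP := Phi_pos (d1 k sigma)).
  assert (HCDs : C_D k sigma = c / Phi (d1 k sigma)) by (unfold C_D; rewrite Hsig; reflexivity).
  assert (HCDs0 : 0 < C_D k sigma) by (rewrite HCDs; apply Rdiv_lt_0_compat; lra).
  assert (Hmono := C_D_mono k sigma U Hk Hs HU).
  assert (H1 := C_D_le_1 k U).
  split.
  - apply Rle_div_r; [lra |]; nra.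
  - apply Rle_div_l; [lra |].
    apply Rle_trans with (Phi (d1 k sigma) * C_D k sigma).
    + rewrite HCDs; right; field; lra.
    + apply Rmult_le_compat_l; lra.
Qed.

Theorem proposition5 (k c sigma U : R) :
  0 <= k ->
  0 < c < 1 ->
  0 < sigma ->
  C_BS k sigma = c ->
  sigma <= U ->
  (0 < c / C_D k U < 1) /\ L2 k c <= G k c U <= sigma.
Proof.
  intros Hk Hc Hs Hsig HU.
  destruct (G_level_bounds k c sigma U Hk (proj1 Hc) Hs Hsig HU) as [Hcp Hps].
  assert (Hlt1 := Phi_lt_1 (d1 k sigma)).
  set (p := c / C_D k U) in *.
  destruct (Phi_inv_spec p (d1 k sigma) ltac:(lra) Hps) as [Hpinv Hpb].
  destruct (Phi_inv_spec c (d1 k sigma) ltac:(lra) ltac:(lra)) as [Hcinv _].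
  split; [lra |].
  unfold L2, G; fold p; split.
  - apply d1_inv_mono, Phi_le_inv; [exact Hk |]; lra.
  - rewrite <- (d1_inv_d1 k sigma Hk Hs).
    apply d1_inv_mono; assumption.
Qed.
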